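(* Let $G$ be a transitive and finite directed graph which is not a cycle, and let $\widetilde{G}$ be a graph obtained from $G$ by repeatedly applying edge contractions $G'\mapsto G'/e$ along edges $e$ whose range has in-degree $1$ (in the current graph $G'$), until no such edges remain. Then $\widetilde{G}$ has in-degree at least $2$ at every vertex, and if $\widetilde{G}$ has $B(\mathcal{H})$ as a free semigroupoid algebra, then $G$ also has $B(\mathcal{K})$ as a free semigroupoid algebra for some Hilbert space $\mathcal{K}$.
   Context: A directed graph $G=(V,E,r,s)$; in-degree of $v$ is $|r^{-1}(v)|$; $G$ is transitive if there is a path between any two vertices. ''$G$ is a cycle'' means $G$ is the $n$-cycle graph for some $n\ge1$. The edge contraction $G/e$ removes $e$ and identifies $s(e)$ with $r(e)$; when $r(e)\neq s(e)$ the vertex $r(e)$ is removed and edges with source/range $r(e)$ are redirected to have source/range $s(e)$. A TCK family on $\mathcal{H}$: $S_v$ pairwise orthogonal projections, $S_e^*S_e=S_{s(e)}$, $\sum_{e\in F}S_eS_e^*\le S_v$ for finite $F\subseteq r^{-1}(v)$, and $\mathrm{SOT}\text{-}\sum_vS_v=I$. ''Having $B(\mathcal{H})$ as a free semigroupoid algebra'' means there is a TCK family on $\mathcal{H}$ whose generated WOT-closed algebra is $B(\mathcal{H})$. *)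

From HB Require Import structures.
From mathcomp Require Import all_boot all_order all_algebra.
From mathcomp Require Import complex.
From mathcomp Require Import Rstruct.

Set Implicit Arguments.
Unset Strict Implicit.
Unset Printing Implicit Defensive.

Import Order.TTheory GRing.Theory Num.Theory.
Local Open Scope ring_scope.

Record graph := Graph {
  gV : finType;
  gE : finType;
  gr : gE -> gV;   (* range  *)
  gs : gE -> gV    (* source *)
}.

Definition indeg (G : graph) (v : gV G) : nat := #|[set e | gr e == v]|.

Fixpoint path_from_to (G : graph) (v w : gV G) (p : seq (gE G)) : Prop :=
  match p with
  | [::] => False
  | e :: p' =>
      gs e = v /\ (match p' with [::] => gr e = w
                               | _ => path_from_to (gr e) w p' end)
  end.

Definition transitive_graph (G : graph) : Prop :=
  forall v w : gV G, exists p : seq (gE G), path_from_to v w p.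

Definition is_cycle (G : graph) : Prop :=
  exists n : nat, (0 < n)%N /\
  exists (fV : gV G -> 'I_n) (fE : gE G -> 'I_n),
    bijective fV /\ bijective fE /\
    (forall e, fV (gs e) = fE e) /\
    (forall e, fV (gr e) = ordS (fE e)).

Definition cV_pred (G : graph) (e : gE G) (v : gV G) : bool :=
  (gr e == gs e) || (v != gr e).

Definition redirect (G : graph) (e : gE G) (x : gV G) : gV G :=
  if x == gr e then gs e else x.

Lemma redirect_ok (G : graph) (e : gE G) (x : gV G) :
  cV_pred e (redirect e x).
Proof.
rewrite /cV_pred /redirect.
case: (x =P gr e) => [_|/eqP ->]; last by rewrite orbT.
by case: (gr e =P gs e) => [->//|/eqP]; rewrite eq_sym => ->; rewrite orbT.
Qed.

Definition contract (G : graph) (e : gE G) : graph :=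
  @Graph {v : gV G | cV_pred e v} {f : gE G | f != e}
    (fun f => exist _ (redirect e (gr (val f))) (redirect_ok e _))
    (fun f => exist _ (redirect e (gs (val f))) (redirect_ok e _)).

Definition contract_step (G H : graph) : Prop :=
  exists e : gE G, indeg (gr e) = 1%N /\ H = contract e.

Inductive contracts_to : graph -> graph -> Prop :=
  | ct_refl G : contracts_to G G
  | ct_step G G1 H : contract_step G G1 -> contracts_to G1 H -> contracts_to G H.

Definition fully_contracted (G : graph) : Prop :=
  forall e : gE G, indeg (gr e) <> 1%N.

Local Open Scope complex_scope.
Definition C : numClosedFieldType := (Rdefinitions.R)[i].
Local Close Scope complex_scope.

Record hilbert := Hilbert {
  hV : lmodType C;
  inner : hV -> hV -> C;
  inner_linear : forall (a : C) (x y z : hV),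
      inner (a *: x + y) z = a * inner x z + inner y z;
  inner_conj : forall x y : hV, inner y x = Num.conj (inner x y);
  inner_ge0 : forall x : hV, 0 <= inner x x;
  inner_eq0 : forall x : hV, inner x x = 0 -> x = 0;
  inner_complete : forall u : nat -> hV,
      (forall eps : C, 0 < eps -> exists N : nat, forall m n : nat,
          (N <= m)%N -> (N <= n)%N -> inner (u m - u n) (u m - u n) < eps) ->
      exists l : hV, forall eps : C, 0 < eps -> exists N : nat, forall n : nat,
          (N <= n)%N -> inner (u n - l) (u n - l) < eps
}.

Definition op (H : hilbert) := hV H -> hV H.

Definition bounded_op (H : hilbert) (T : op H) : Prop :=
  (forall (a : C) (x y : hV H), T (a *: x + y) = a *: T x + T y) /\
  exists M : C, forall x : hV H, `|inner (T x) (T x)| <= M * `|inner x x|.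

Definition is_adjoint (H : hilbert) (T Ts : op H) : Prop :=
  forall x y : hV H, inner (T x) y = inner x (Ts y).

Definition tck_family (G : graph) (H : hilbert)
    (Sv : gV G -> op H) (Se : gE G -> op H) : Prop :=
  (forall v, bounded_op (Sv v)) /\ (forall e, bounded_op (Se e)) /\
  exists Ses : gE G -> op H,
    (forall e, is_adjoint (Se e) (Ses e)) /\
    (forall v, is_adjoint (Sv v) (Sv v)) /\
    (forall v x, Sv v (Sv v x) = Sv v x) /\
    (forall v w, v != w -> forall x, Sv v (Sv w x) = 0) /\
    (forall e x, Ses e (Se e x) = Sv (gs e) x) /\
    (forall (v : gV G) (F : {set gE G}), (forall e, e \in F -> gr e = v) ->
        forall x, 0 <= inner (Sv v x - \sum_(e in F) Se e (Ses e x)) x) /\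
    (* SOT-sum_v S_v = I (finite sum, G finite) *)
    (forall x, \sum_(v : gV G) Sv v x = x).

Definition op_subalgebra (H : hilbert) (A : op H -> Prop) : Prop :=
  (forall T, A T -> bounded_op T) /\
  (forall T U, A T -> A U -> A (fun x => T x + U x)) /\
  (forall (a : C) T, A T -> A (fun x => a *: T x)) /\
  (forall T U, A T -> A U -> A (fun x => T (U x))).

Definition wot_closure (H : hilbert) (A : op H -> Prop) (T : op H) : Prop :=
  bounded_op T /\
  forall (s : seq (hV H * hV H)) (eps : C), 0 < eps ->
    exists U, A U /\ forall xy, xy \in s ->
      `|inner (T xy.1 - U xy.1) xy.2| < eps.

Definition wot_closed (H : hilbert) (A : op H -> Prop) : Prop :=
  forall T, wot_closure A T -> A T.

(* The WOT-closed algebra generated by the family is all of B(H):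
   every WOT-closed subalgebra of B(H) containing the generators is B(H). *)
Definition generates_BH (G : graph) (H : hilbert)
    (Sv : gV G -> op H) (Se : gE G -> op H) : Prop :=
  forall A : op H -> Prop,
    op_subalgebra A -> wot_closed A ->
    (forall v, A (Sv v)) -> (forall e, A (Se e)) ->
    forall T, bounded_op T -> A T.

Definition has_BH_fsa (G : graph) (H : hilbert) : Prop :=
  (exists x : hV H, x != 0) /\
  exists (Sv : gV G -> op H) (Se : gE G -> op H),
    tck_family Sv Se /\ generates_BH Sv Se.

(* Contracting an edge [e] whose range [w] has in-degree one keeps the graph
   transitive and keeps every vertex of in-degree at least two.  A transitive
   graph that is not a cycle has such a vertex, so [e] is not a loop and some
   edge [g] leaves [w].  A TCK family [T] of [G/e] on [H] then lifts to a TCK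
   family [S] of [G] on [H ⊕ T_u H], where [u = s(e)].  If [T] generates [B(H)],
   the WOT-closed algebra generated by [S] contains every operator acting on the
   first summand alone, and composing these with [S_e] and [S_g] produces the
   other three blocks, hence all of [B(H ⊕ T_u H)].  The in-degree bound holds
   because in-degrees of a transitive graph are positive and a fully contracted
   graph has none equal to one. *)

From HB Require Import structures.
From mathcomp Require Import all_boot all_order all_algebra.
From Stdlib Require Import FunctionalExtensionality.

Set Implicit Arguments.
Unset Strict Implicit.
Unset Printing Implicit Defensive.

Import Order.TTheory GRing.Theory Num.Theory.

Lemma path_from_to_ends (G : graph) (v w : gV G) (p : seq (gE G)) :
  path_from_to v w p -> (exists f, gs f = v) /\ (exists f, gr f = w).
Proof.
elim: p v => [//|f p IH] v /= [fv Hp]; split; first by exists f.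
by case: p IH Hp => [_ fw|g p IH Hp]; [exists f | case: (IH _ Hp)].
Qed.

Lemma path_from_to_enters (G : graph) (v w : gV G) (p : seq (gE G)) :
  path_from_to v w p -> v != w -> exists2 f, gs f != w & gr f = w.
Proof.
elim: p v => [//|f p IH] v /= [fv Hp] vw.
case: p IH Hp => [_ fw|g p IH Hp]; first by exists f; rewrite ?fv.
by case: (eqVneq (gr f) w) => [fw|/(IH _ Hp)]; first by exists f; rewrite ?fv.
Qed.

Lemma transitive_indeg_gt0 (G : graph) (v : gV G) :
  transitive_graph G -> (0 < indeg v)%N.
Proof.
move=> /(_ v v) [p /path_from_to_ends [_ [f fv]]].
by rewrite /indeg card_gt0; apply/set0Pn; exists f; rewrite inE fv.
Qed.

Lemma indeg1_edge_unique (G : graph) (e f : gE G) :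
  indeg (gr e) = 1%N -> gr f = gr e -> f = e.
Proof.
rewrite /indeg => /eqP/cards1P [x Ex] fe.
have : e \in [set g | gr g == gr e] by rewrite inE.
have : f \in [set g | gr g == gr e] by rewrite inE fe.
by rewrite Ex !inE => /eqP -> /eqP ->.
Qed.

Lemma fully_contracted_indeg_ge2 (G : graph) (v : gV G) :
  transitive_graph G -> fully_contracted G -> (2 <= indeg v)%N.
Proof.
move=> trG fcG; have v_gt0 := transitive_indeg_gt0 v trG.
rewrite ltn_neqAle v_gt0 andbT eq_sym; apply/eqP => indeg1.
have /set0Pn [f] : [set f | gr f == v] != set0 by rewrite -card_gt0.
by rewrite inE => /eqP fv; apply: (fcG f); rewrite fv.
Qed.

Section IndegOneCycle.
Variable G : graph.
Hypotheses (trG : transitive_graph G) (indeg1 : forall v : gV G, indeg v = 1%N).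

Lemma gr_inj : injective (@gr G).
Proof. by move=> e f fe; apply: indeg1_edge_unique (indeg1 _) _. Qed.

Lemma out_edge_exists (v : gV G) : exists f, gs f == v.
Proof. by have [p /path_from_to_ends [[f /eqP fv] _]] := trG v v; exists f. Qed.

Definition out_edge (v : gV G) : gE G := xchoose (out_edge_exists v).

Lemma gs_out_edge v : gs (out_edge v) = v.
Proof. exact/eqP/(xchooseP (out_edge_exists v)). Qed.

Lemma out_edge_gs e : out_edge (gs e) = e.
Proof.
have out_inj : injective out_edge.
  by move=> v w vw; rewrite -(gs_out_edge v) vw gs_out_edge.
have /codomP [v ->] := inj_card_onto out_inj (leq_card _ gr_inj) e.
by rewrite gs_out_edge.
Qed.

Definition successor (v : gV G) : gV G := gr (out_edge v).

Lemma successor_gs e : successor (gs e) = gr e.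
Proof. by rewrite /successor out_edge_gs. Qed.

Lemma successor_inj : injective successor.
Proof.
by move=> v w /gr_inj vw; rewrite -(gs_out_edge v) -(gs_out_edge w) vw.
Qed.

Lemma path_from_to_fconnect (v w : gV G) p :
  path_from_to v w p -> fconnect successor v w.
Proof.
elim: p v => [//|f p IH] v /= [fv Hp].
have vf : successor v = gr f by rewrite -fv successor_gs.
case: p IH Hp => [_ <-|g p IH Hp]; first by rewrite -vf fconnect1.
by apply: connect_trans (IH _ Hp); rewrite -vf fconnect1.
Qed.

Lemma transitive_indeg1_cycle (v0 : gV G) : is_cycle G.
Proof.
have conn v : fconnect successor v0 v.
  by have [p /path_from_to_fconnect] := trG v0 v.
exists (order successor v0); split; first exact: order_gt0.
pose fV v := Ordinal (findex_max (conn v)).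
pose fV_inv (i : 'I_(order successor v0)) := iter i successor v0.
have fVK : cancel fV fV_inv by move=> v; rewrite /fV_inv /= iter_findex.
have fV_invK : cancel fV_inv fV by move=> i; apply: val_inj; rewrite /= findex_iter.
exists fV, (fun e => fV (gs e)); split; first by exists fV_inv.
split.
  exists (fun i => out_edge (fV_inv i)) => [e|i]; first by rewrite fVK out_edge_gs.
  by rewrite /= gs_out_edge fV_invK.
split=> // e; apply: val_inj; rewrite /= -successor_gs.
set x := gs e; rewrite {1}(esym (iter_findex (conn x))) -iterS.
have := findex_max (conn x); rewrite leq_eqVlt => /orP [/eqP ->|lt].
  by rewrite (iter_order successor_inj) findex0 modnn.
by rewrite findex_iter // modn_small.
Qed.

End IndegOneCycle.

(* The premise lets the empty graph, which is not a cycle either, qualify. *)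
Definition has_branch_vertex (G : graph) : Prop :=
  inhabited (gV G) -> exists x : gV G, (2 <= indeg x)%N.

Lemma noncycle_has_branch_vertex (G : graph) :
  transitive_graph G -> ~ is_cycle G -> has_branch_vertex G.
Proof.
move=> trG ncG [v0].
case: (pickP (fun x : gV G => 1 < indeg x)%N) => [x Hx|none]; first by exists x.
case: ncG; apply: (@transitive_indeg1_cycle _ trG) v0 => v.
by apply/eqP; rewrite eqn_leq leqNgt none transitive_indeg_gt0.
Qed.

Lemma indeg1_range_not_loop (G : graph) (e : gE G) :
  transitive_graph G -> has_branch_vertex G -> indeg (gr e) = 1%N ->
  gr e != gs e.
Proof.
move=> trG brG indeg1; apply/eqP => loop_e.
have [x x2] := brG (inhabits (gr e)).
have xw : x != gr e by apply: contraTneq x2 => ->; rewrite indeg1.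
have [p px] := trG x (gr e).
have [f + /(indeg1_edge_unique indeg1) fe] := path_from_to_enters px xw.
by rewrite fe -loop_e eqxx.
Qed.

Section Contraction.
Variables (G : graph) (e : gE G).

Definition contract_vertex (x : gV G) : gV (contract e) :=
  exist _ (redirect e x) (redirect_ok e x).

Lemma contract_vertex_gr : contract_vertex (gr e) = contract_vertex (gs e).
Proof.
by apply: val_inj; rewrite /= /redirect eqxx; case: eqP.
Qed.

Lemma val_contract_vertex (x : gV G) : x != gr e -> val (contract_vertex x) = x.
Proof. by rewrite /= /redirect => /negbTE ->. Qed.

Lemma sum_contract_edges (V : nmodType) (A : {pred gE G}) (F : gE G -> V) :
  e \notin A ->
  (\sum_(f in A) F f = \sum_(f' : gE (contract e) | val f' \in A) F (val f'))%R.
Proof.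
move=> eA; rewrite (reindex_omap (val : gE (contract e) -> _) insub).
  by apply: eq_bigl => f'; rewrite valK eqxx andbT.
by move=> f fA; rewrite insubT //; apply: contraNneq eA => <-.
Qed.

Hypothesis e_not_loop : gr e != gs e.

Lemma cV_predE v : cV_pred e v = (v != gr e).
Proof. by rewrite /cV_pred (negbTE e_not_loop). Qed.

Lemma contract_vertex_val (v : gV (contract e)) : contract_vertex (val v) = v.
Proof.
apply: val_inj; case: v => v /=; rewrite cV_predE.
exact: val_contract_vertex.
Qed.

Lemma sum_contract_vertices (V : nmodType) (F : gV G -> V) :
  (\sum_(v | v != gr e) F v = \sum_(v' : gV (contract e)) F (val v'))%R.
Proof.
rewrite (reindex_omap (val : gV (contract e) -> _) insub).
  by apply: eq_bigl => v'; rewrite valK eqxx andbT -cV_predE; case: v'.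
by move=> v vw; rewrite insubT ?cV_predE.
Qed.

Lemma path_from_to_contract p v w : path_from_to v w p -> w != gr e ->
  path_from_to (G := contract e) (contract_vertex v) (contract_vertex w)
    (pmap insub p).
Proof.
move=> + we; elim: p v => [//|f p IH] v /= [fv Hp].
case: (eqVneq f e) => [fe|fe].
  subst f; rewrite insubF ?eqxx //=.
  case: p IH Hp => [_ fw|g p IH Hp]; first by rewrite fw eqxx in we.
  have := IH _ Hp; congr path_from_to.
  by rewrite contract_vertex_gr fv.
rewrite insubT /=; split; first by rewrite fv.
case: p IH Hp => [_ fw|g p IH Hp]; first by rewrite fw.
by have := IH _ Hp; case: (pmap insub (g :: p)).
Qed.

Lemma transitive_contract : transitive_graph G -> transitive_graph (contract e).
Proof.
move=> trG v w; have [p Hp] := trG (val v) (val w).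
exists (pmap insub p); rewrite -(contract_vertex_val v) -(contract_vertex_val w).
by apply: path_from_to_contract Hp _; rewrite -cV_predE; case: w.
Qed.

Lemma indeg_contract (x : gV G) :
  x != gr e -> (indeg x <= indeg (contract_vertex x))%N.
Proof.
move=> xw; rewrite /indeg -(card_imset _ val_inj).
apply/subset_leq_card/subsetP => f; rewrite inE => /eqP fx.
have fe : f != e by apply: contraNneq xw => <-; rewrite fx.
apply/imsetP; exists (exist _ f fe : gE (contract e)) => //.
by rewrite inE; apply/eqP/val_inj; rewrite /= fx /redirect (negbTE xw).
Qed.

End Contraction.

Lemma has_branch_vertex_contract (G : graph) (e : gE G) :
  has_branch_vertex G -> indeg (gr e) = 1%N -> has_branch_vertex (contract e).
Proof.
move=> brG indeg1 [v0]; have [x x2] := brG (inhabits (val v0)).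
have xw : x != gr e by apply: contraTneq x2 => ->; rewrite indeg1.
by exists (contract_vertex e x); apply: leq_trans x2 (indeg_contract xw).
Qed.

Local Open Scope ring_scope.

Section InnerProduct.
Variable H : hilbert.
Implicit Types (x y z : hV H) (a : C).

Definition inner_left z x : C^o := inner x z.
HB.instance Definition _ z := GRing.isLinear.Build C (hV H) C^o *%R
  (inner_left z) (fun a x y => inner_linear a x y z).

Lemma inner0l z : inner 0 z = 0.
Proof. exact: (linear0 (inner_left z)). Qed.

Lemma innerDl x y z : inner (x + y) z = inner x z + inner y z.
Proof. exact: (linearD (inner_left z)). Qed.

Lemma innerZl a x z : inner (a *: x) z = a * inner x z.
Proof. exact: (scalarZ (inner_left z)). Qed.

Lemma innerBl x y z : inner (x - y) z = inner x z - inner y z.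
Proof. exact: (linearB (inner_left z)). Qed.

Lemma inner0r z : inner z 0 = 0.
Proof. by rewrite inner_conj inner0l rmorph0. Qed.

Lemma innerDr x y z : inner z (x + y) = inner z x + inner z y.
Proof. by rewrite inner_conj innerDl rmorphD /= -!inner_conj. Qed.

Lemma innerZr a x z : inner z (a *: x) = Num.conj a * inner z x.
Proof. by rewrite inner_conj innerZl rmorphM /= -!inner_conj. Qed.

Lemma innerBr x y z : inner z (x - y) = inner z x - inner z y.
Proof. by rewrite inner_conj innerBl rmorphB /= -!inner_conj. Qed.

Lemma inner_pythagoras x y :
  inner x y = 0 -> inner (x + y) (x + y) = inner x x + inner y y.
Proof.
move=> xy0; have yx0 : inner y x = 0 by rewrite inner_conj xy0 rmorph0.
by rewrite innerDl !innerDr xy0 yx0 addr0 add0r.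
Qed.

End InnerProduct.

Definition bounded_map (H1 H2 : hilbert) (T : hV H1 -> hV H2) : Prop :=
  linear T /\
  exists2 M : C, 0 <= M & forall x, inner (T x) (T x) <= M * inner x x.

Lemma bounded_opP (H : hilbert) (T : op H) : bounded_op T <-> bounded_map T.
Proof.
have norm_inner (x : hV H) : `|inner x x| = inner x x by exact/ger0_norm/inner_ge0.
split=> [[LT [M TM]]|[LT [M M0 TM]]]; split=> //; last first.
  by exists M => x; rewrite !norm_inner.
exists `|M| => // x; have := TM x; rewrite !norm_inner => TMx.
have Mx_ge0 : 0 <= M * inner x x by exact: le_trans (inner_ge0 _) TMx.
by rewrite -(norm_inner x) -normrM ger0_norm.
Qed.

Lemma bounded_map_comp (H1 H2 H3 : hilbert)
    (S : hV H1 -> hV H2) (T : hV H2 -> hV H3) :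
  bounded_map S -> bounded_map T -> bounded_map (fun x => T (S x)).
Proof.
move=> [LS [M1 M10 SM]] [LT [M2 M20 TM]]; split; first by move=> a x y; rewrite LS LT.
exists (M2 * M1) => [|x]; first exact: mulr_ge0.
by apply: le_trans (TM _) _; rewrite -mulrA ler_wpM2l.
Qed.

Section LinearMap.
Variables (H1 H2 : hilbert) (T : hV H1 -> hV H2).
Hypothesis T_linear : linear T.
HB.instance Definition _ := GRing.isLinear.Build C (hV H1) (hV H2) *:%R T T_linear.

Lemma lin0 : T 0 = 0.
Proof. exact: linear0. Qed.

Lemma linD x y : T (x + y) = T x + T y.
Proof. exact: linearD. Qed.

Lemma linB x y : T (x - y) = T x - T y.
Proof. exact: linearB. Qed.

Lemma lin_sum (I : finType) (P : pred I) (F : I -> hV H1) :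
  T (\sum_(i | P i) F i) = \sum_(i | P i) T (F i).
Proof. exact: linear_sum. Qed.

End LinearMap.

Section Adjoint.
Variable H : hilbert.
Implicit Types (x y : hV H) (T Ts P : op H).

Lemma adjoint_linear T Ts : is_adjoint T Ts -> linear Ts.
Proof.
move=> AT a x y.
suff d0 z : inner z (Ts (a *: x + y) - (a *: Ts x + Ts y)) = 0.
  by apply/eqP; rewrite -subr_eq0; apply/eqP/inner_eq0/d0.
by rewrite innerBr innerDr innerZr -!AT innerDr innerZr subrr.
Qed.

Section Projection.
Variable P : op H.
Hypotheses (P_linear : linear P) (P_selfadj : is_adjoint P P)
  (P_idem : forall x, P (P x) = P x).

Lemma proj_inner_self x : inner (P x) (P x) = inner (P x) x.
Proof. by rewrite P_selfadj P_idem -P_selfadj. Qed.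

Lemma proj_inner_ge0 x : 0 <= inner (P x) x.
Proof. by rewrite -proj_inner_self inner_ge0. Qed.

Lemma proj_pythagoras x :
  inner x x = inner (P x) (P x) + inner (x - P x) (x - P x).
Proof.
rewrite -inner_pythagoras ?subrKC //.
by rewrite P_selfadj (linB P_linear) P_idem subrr inner0r.
Qed.

Lemma proj_le x : inner (P x) (P x) <= inner x x.
Proof. by rewrite [leRHS]proj_pythagoras lerDl inner_ge0. Qed.

Lemma proj_compl_le x : inner (x - P x) (x - P x) <= inner x x.
Proof. by rewrite [leRHS]proj_pythagoras lerDr inner_ge0. Qed.

Lemma proj_fixed_closed l :
  (forall eps : C, 0 < eps -> exists2 y, P y = y & inner (y - l) (y - l) < eps) ->
  P l = l.
Proof.
move=> approx; apply/eqP; rewrite -subr_eq0; apply/eqP/inner_eq0.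
set d := inner _ _; have d_ge0 : 0 <= d by exact: inner_ge0.
apply/eqP/negPn/negP => d_neq0.
have d_gt0 : 0 < d by rewrite lt_def d_neq0.
have [y Py yl] := approx d d_gt0.
have dE : P l - l = (y - l) - P (y - l).
  by rewrite (linB P_linear) Py opprB [RHS]addrC addrA subrK.
by have := le_lt_trans (proj_compl_le (y - l)) yl; rewrite -dE ltxx.
Qed.

End Projection.

Lemma partial_isometry_source T Ts P : linear T -> linear P -> is_adjoint T Ts ->
  (forall x, P (P x) = P x) -> (forall x, Ts (T x) = P x) ->
  forall x, T (P x) = T x.
Proof.
move=> LT LP AT IP TsT x; apply/eqP; rewrite -subr_eq0 -(linB LT).
by apply/eqP/inner_eq0; rewrite AT TsT (linB LP) IP subrr inner0r.
Qed.

Lemma adjoint_contraction T Ts P : linear P -> is_adjoint P P ->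
  (forall x, P (P x) = P x) -> is_adjoint T Ts ->
  (forall y, 0 <= inner (P y - T (Ts y)) y) ->
  forall y, inner (Ts y) (Ts y) <= inner y y.
Proof.
move=> LP AP IP AT CK y; apply: le_trans (proj_le LP AP IP y).
by rewrite (proj_inner_self AP IP) -AT -subr_ge0 -innerBl.
Qed.

End Adjoint.

Definition cauchy (V : zmodType) (ip : V -> V -> C) (u : nat -> V) : Prop :=
  forall eps : C, 0 < eps -> exists N : nat, forall m n : nat,
    (N <= m)%N -> (N <= n)%N -> ip (u m - u n) (u m - u n) < eps.

Definition cvg_to (V : zmodType) (ip : V -> V -> C) (u : nat -> V) (l : V) : Prop :=
  forall eps : C, 0 < eps -> exists N : nat, forall n : nat,
    (N <= n)%N -> ip (u n - l) (u n - l) < eps.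

Section DirectSumRange.
Variables (H : hilbert) (P : op H).
Hypotheses (P_linear : linear P) (P_selfadj : is_adjoint P P)
  (P_idem : forall x, P (P x) = P x).

Definition dsum_pred : {pred hV H * hV H} := fun p => P p.2 == p.2.

Lemma dsum_pred_submod : submod_closed dsum_pred.
Proof.
split; first by rewrite unfold_in /dsum_pred /= (lin0 P_linear).
move=> a p q; rewrite !unfold_in /dsum_pred /= => /eqP Pp /eqP Pq.
by rewrite P_linear Pp Pq.
Qed.
HB.instance Definition _ :=
  GRing.isSubmodClosed.Build C (hV H * hV H)%type dsum_pred dsum_pred_submod.

Inductive dsum : predArgType := DSum p of p \in dsum_pred.
Definition dsum_val (x : dsum) := let: DSum p _ := x in p.
HB.instance Definition _ := [isSub for dsum_val].
HB.instance Definition _ := [Choice of dsum by <:].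
HB.instance Definition _ := [SubChoice_isSubZmodule of dsum by <:].
HB.instance Definition _ := [SubZmodule_isSubLmodule of dsum by <:].

Definition dsum_pr1 (x : dsum) : hV H := (dsum_val x).1.
Definition dsum_pr2 (x : dsum) : hV H := (dsum_val x).2.

Lemma P_dsum_pr2 x : P (dsum_pr2 x) = dsum_pr2 x.
Proof. by case: x => p; rewrite /dsum_pr2 /= unfold_in => /eqP. Qed.

Lemma dsum_eq x y : dsum_pr1 x = dsum_pr1 y -> dsum_pr2 x = dsum_pr2 y -> x = y.
Proof.
rewrite /dsum_pr1 /dsum_pr2 => eq1 eq2; apply: val_inj; move: eq1 eq2.
by case: x => [[a b] ?]; case: y => [[c d] ?] /= -> ->.
Qed.

Definition dsum_inner (x y : dsum) : C :=
  inner (dsum_pr1 x) (dsum_pr1 y) + inner (dsum_pr2 x) (dsum_pr2 y).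

Lemma dsum_inner_linear (a : C) (x y z : dsum) :
  dsum_inner (a *: x + y) z = a * dsum_inner x z + dsum_inner y z.
Proof. by rewrite /dsum_inner !inner_linear addrACA -mulrDr. Qed.

Lemma dsum_inner_conj (x y : dsum) : dsum_inner y x = Num.conj (dsum_inner x y).
Proof. by rewrite /dsum_inner rmorphD /= -!inner_conj. Qed.

Lemma dsum_inner_ge0 (x : dsum) : 0 <= dsum_inner x x.
Proof. by rewrite addr_ge0 ?inner_ge0. Qed.

Lemma dsum_inner_eq0 (x : dsum) : dsum_inner x x = 0 -> x = 0.
Proof.
move/eqP; rewrite paddr_eq0 ?inner_ge0 // => /andP [/eqP/inner_eq0 x1 /eqP/inner_eq0 x2].
exact: dsum_eq.
Qed.

Lemma dsum_inner_pr1_le (x : dsum) : inner (dsum_pr1 x) (dsum_pr1 x) <= dsum_inner x x.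
Proof. by rewrite lerDl inner_ge0. Qed.

Lemma dsum_inner_pr2_le (x : dsum) : inner (dsum_pr2 x) (dsum_pr2 x) <= dsum_inner x x.
Proof. by rewrite lerDr inner_ge0. Qed.

Lemma dsum_complete (u : nat -> dsum) :
  cauchy dsum_inner u -> exists l, cvg_to dsum_inner u l.
Proof.
move=> u_cauchy.
have [l1 cvg1] : exists l1, cvg_to (@inner H) (fun n => dsum_pr1 (u n)) l1.
  apply: inner_complete => eps /u_cauchy [N uN]; exists N => m n Nm Nn.
  exact: le_lt_trans (dsum_inner_pr1_le _) (uN m n Nm Nn).
have [l2 cvg2] : exists l2, cvg_to (@inner H) (fun n => dsum_pr2 (u n)) l2.
  apply: inner_complete => eps /u_cauchy [N uN]; exists N => m n Nm Nn.
  exact: le_lt_trans (dsum_inner_pr2_le _) (uN m n Nm Nn).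
have Pl2 : (l1, l2) \in dsum_pred.
  apply/eqP/(proj_fixed_closed P_linear P_selfadj P_idem) => eps /cvg2 [N uN].
  by exists (dsum_pr2 (u N)); [exact: P_dsum_pr2 | exact: uN].
exists (DSum Pl2) => eps eps_gt0.
have [N1 uN1] := cvg1 _ (divr_gt0 eps_gt0 (ltr0n _ 2)).
have [N2 uN2] := cvg2 _ (divr_gt0 eps_gt0 (ltr0n _ 2)).
exists (maxn N1 N2) => n; rewrite geq_max => /andP [N1n N2n].
by rewrite [eps]splitr ltrD ?uN1 ?uN2.
Qed.

Definition dsum_hilbert : hilbert := Hilbert dsum_inner_linear dsum_inner_conj
  dsum_inner_ge0 dsum_inner_eq0 dsum_complete.

Local Notation K := dsum_hilbert.

Lemma dsum_pr1_linear : linear (dsum_pr1 : hV K -> hV H). Proof. by []. Qed.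
Lemma dsum_pr2_linear : linear (dsum_pr2 : hV K -> hV H). Proof. by []. Qed.
HB.instance Definition _ := GRing.isLinear.Build C (hV K) (hV H) *:%R
  (dsum_pr1 : hV K -> hV H) dsum_pr1_linear.
HB.instance Definition _ := GRing.isLinear.Build C (hV K) (hV H) *:%R
  (dsum_pr2 : hV K -> hV H) dsum_pr2_linear.

Lemma dsum_in1_subproof (h : hV H) : (h, 0) \in dsum_pred.
Proof. by rewrite unfold_in /dsum_pred /= (lin0 P_linear). Qed.

Lemma dsum_in2_subproof (h : hV H) : (0, P h) \in dsum_pred.
Proof. by rewrite unfold_in /dsum_pred /= P_idem. Qed.

Definition dsum_in1 (h : hV H) : hV K := DSum (dsum_in1_subproof h).
Definition dsum_in2 (h : hV H) : hV K := DSum (dsum_in2_subproof h).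

Lemma dsum_pr1_in1 h : dsum_pr1 (dsum_in1 h) = h. Proof. by []. Qed.
Lemma dsum_pr2_in1 h : dsum_pr2 (dsum_in1 h) = 0. Proof. by []. Qed.
Lemma dsum_pr1_in2 h : dsum_pr1 (dsum_in2 h) = 0. Proof. by []. Qed.
Lemma dsum_pr2_in2 h : dsum_pr2 (dsum_in2 h) = P h. Proof. by []. Qed.

Lemma dsum_in2_P h : dsum_in2 (P h) = dsum_in2 h.
Proof. by apply: dsum_eq; rewrite ?dsum_pr2_in2 ?P_idem. Qed.

Lemma dsum_innerE (x y : hV K) :
  inner x y = inner (dsum_pr1 x) (dsum_pr1 y) + inner (dsum_pr2 x) (dsum_pr2 y).
Proof. by []. Qed.

Lemma dsum_in1_linear : linear dsum_in1.
Proof.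
move=> a x y; apply: dsum_eq; rewrite linearP //=.
by rewrite !dsum_pr2_in1 scaler0 addr0.
Qed.

Lemma dsum_in2_linear : linear dsum_in2.
Proof.
move=> a x y; apply: dsum_eq; rewrite linearP /=.
  by rewrite !dsum_pr1_in2 scaler0 addr0.
by rewrite !dsum_pr2_in2 P_linear.
Qed.

HB.instance Definition _ := GRing.isLinear.Build C (hV H) (hV K) *:%R
  dsum_in1 dsum_in1_linear.
HB.instance Definition _ := GRing.isLinear.Build C (hV H) (hV K) *:%R
  dsum_in2 dsum_in2_linear.

Lemma dsum_decomp (x : hV K) : x = dsum_in1 (dsum_pr1 x) + dsum_in2 (dsum_pr2 x).
Proof.
apply: dsum_eq; rewrite linearD /=; first by rewrite dsum_pr1_in1 dsum_pr1_in2 addr0.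
by rewrite dsum_pr2_in1 dsum_pr2_in2 P_dsum_pr2 add0r.
Qed.

Lemma bounded_dsum_pr1 : bounded_map (dsum_pr1 : hV K -> hV H).
Proof. by split=> //; exists 1 => // x; rewrite mul1r dsum_inner_pr1_le. Qed.

Lemma bounded_dsum_pr2 : bounded_map (dsum_pr2 : hV K -> hV H).
Proof. by split=> //; exists 1 => // x; rewrite mul1r dsum_inner_pr2_le. Qed.

Lemma bounded_dsum_in1 : bounded_map dsum_in1.
Proof.
split; first exact: dsum_in1_linear.
by exists 1 => // h; rewrite mul1r dsum_innerE /= inner0l addr0.
Qed.

Lemma bounded_dsum_in2 : bounded_map dsum_in2.
Proof.
split; first exact: dsum_in2_linear.
exists 1 => // h; rewrite mul1r dsum_innerE /= inner0l add0r.
exact: proj_le.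
Qed.

Definition corner (X : op H) : op K := fun x => dsum_in1 (X (dsum_pr1 x)).

Lemma corner_subalgebra (A : op K -> Prop) :
  op_subalgebra A -> op_subalgebra (fun X => A (corner X)).
Proof.
move=> [A_bounded [A_add [A_scale A_comp]]]; split.
  move=> X /A_bounded/bounded_opP corner_bounded; apply/bounded_opP.
  exact: bounded_map_comp (bounded_map_comp bounded_dsum_in1 corner_bounded)
    bounded_dsum_pr1.
split.
  move=> X Y AX AY; have := A_add _ _ AX AY; congr A.
  by apply: functional_extensionality => x; rewrite /corner linearD.
split; last by move=> X Y AX AY; exact: A_comp _ _ AX AY.
move=> c X AX; have := A_scale c _ AX; congr A.
by apply: functional_extensionality => x; rewrite /corner linearZ.
Qed.

Lemma corner_wot_closed (A : op K -> Prop) :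
  wot_closed A -> wot_closed (fun X => A (corner X)).
Proof.
move=> A_closed X [/bounded_opP X_bounded X_approx]; apply: A_closed; split.
  apply/bounded_opP; apply: bounded_map_comp bounded_dsum_in1.
  exact: bounded_map_comp bounded_dsum_pr1 X_bounded.
move=> s eps eps_gt0.
have [U [AU U_approx]] :=
  X_approx [seq (dsum_pr1 xy.1, dsum_pr1 xy.2) | xy <- s] eps eps_gt0.
exists (corner U); split=> // xy xy_s.
rewrite dsum_innerE /corner -!linearB /= inner0l addr0.
exact: (U_approx _ (map_f _ xy_s)).
Qed.

End DirectSumRange.

Section LiftAlongContraction.
Variables (G : graph) (e : gE G) (H : hilbert).
Local Notation G' := (contract e).
Local Notation cv := (contract_vertex e).
Variables (Tv : gV G' -> op H) (Te Tes : gE G' -> op H).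
Hypotheses (Tv_bounded : forall v, bounded_op (Tv v))
  (Te_bounded : forall f, bounded_op (Te f))
  (Tes_adj : forall f, is_adjoint (Te f) (Tes f))
  (Tv_selfadj : forall v, is_adjoint (Tv v) (Tv v))
  (Tv_idem : forall v x, Tv v (Tv v x) = Tv v x)
  (Tv_orth : forall v w, v != w -> forall x, Tv v (Tv w x) = 0)
  (Tes_Te : forall f x, Tes f (Te f x) = Tv (gs f) x)
  (Te_CK : forall (v : gV G') (F : {set gE G'}), (forall f, f \in F -> gr f = v) ->
     forall x, 0 <= inner (Tv v x - \sum_(f in F) Te f (Tes f x)) x)
  (Tv_sum : forall x, \sum_(v : gV G') Tv v x = x).
Hypotheses (e_not_loop : gr e != gs e) (indeg1 : indeg (gr e) = 1%N).

Local Notation Tu := (Tv (cv (gs e))).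
Let Tu_linear : linear Tu := (Tv_bounded _).1.
Local Notation K := (dsum_hilbert Tu_linear (Tv_selfadj _) (Tv_idem _)).
Local Notation in1 := (dsum_in1 Tu_linear (Tv_selfadj _) (Tv_idem _)).
Local Notation in2 := (dsum_in2 Tu_linear (Tv_selfadj _) (Tv_idem _)).
Local Notation corner := (@corner _ _ Tu_linear (Tv_selfadj _) (Tv_idem _)).
Local Notation pr1 := (@dsum_pr1 H Tu).
Local Notation pr2 := (@dsum_pr2 H Tu).

(* [S] lives on [H ⊕ T_u H]: the vertex [w] is carried by the second summand,
   a copy of [T_u H], every other vertex keeps its [T] on the first summand, and
   [e] acts as [T_u] from the first summand to the second. *)
Definition inj_at (v : gV G) : hV H -> hV K := if v == gr e then in2 else in1.
Definition proj_at (v : gV G) : hV K -> hV H := if v == gr e then pr2 else pr1.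
Definition edge_op (f : gE G) : op H := if insub f is Some f' then Te f' else Tu.
Definition edge_op_adj (f : gE G) : op H := if insub f is Some f' then Tes f' else Tu.

Definition Sv (v : gV G) : op K := fun x => inj_at v (Tv (cv v) (proj_at v x)).
Definition Se (f : gE G) : op K :=
  fun x => inj_at (gr f) (edge_op f (proj_at (gs f) x)).
Definition Ses (f : gE G) : op K :=
  fun x => inj_at (gs f) (edge_op_adj f (proj_at (gr f) x)).

Lemma Tv_linear v : linear (Tv v). Proof. exact: (Tv_bounded v).1. Qed.

Lemma Tv_gr_e : Tv (cv (gr e)) = Tu.
Proof. by rewrite contract_vertex_gr. Qed.

Lemma gr_neq_e f : f != e -> gr f != gr e.
Proof. by apply: contraNneq => /(indeg1_edge_unique indeg1) ->. Qed.

Lemma inj_at_adj v h x : inner (inj_at v h) x = inner h (proj_at v x).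
Proof.
rewrite /inj_at /proj_at; case: ifP => _; rewrite dsum_innerE /= inner0l.
  by rewrite add0r Tv_selfadj P_dsum_pr2.
by rewrite addr0.
Qed.

Lemma proj_at_adj v x h : inner (proj_at v x) h = inner x (inj_at v h).
Proof. by rewrite inner_conj -inj_at_adj -inner_conj. Qed.

Lemma proj_inj_at v h : proj_at v (inj_at v h) = if v == gr e then Tu h else h.
Proof. by rewrite /inj_at /proj_at; case: ifP. Qed.

Lemma proj_inj_at_other v w h :
  (v == gr e) != (w == gr e) -> proj_at v (inj_at w h) = 0.
Proof. by rewrite /inj_at /proj_at; case: ifP; case: ifP. Qed.

Lemma edge_op_adjoint f : is_adjoint (edge_op f) (edge_op_adj f).
Proof. by rewrite /edge_op /edge_op_adj; case: insub. Qed.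

Lemma edge_op_adj_edge_op f h : edge_op_adj f (edge_op f h) = Tv (cv (gs f)) h.
Proof.
rewrite /edge_op /edge_op_adj; case: insubP => [f' _ <-|]; first exact: Tes_Te.
by rewrite negbK => /eqP ->; rewrite Tv_idem.
Qed.

Lemma edge_op_linear f : linear (edge_op f).
Proof.
by rewrite /edge_op; case: insub => [f'|]; [exact: (Te_bounded f').1 | exact: Tv_linear].
Qed.

Lemma edge_op_source f h : edge_op f (Tv (cv (gs f)) h) = edge_op f h.
Proof.
exact: partial_isometry_source (edge_op_linear f) (Tv_linear (cv (gs f)))
  (edge_op_adjoint f) (Tv_idem _) (edge_op_adj_edge_op f) h.
Qed.

Lemma edge_op_val (f' : gE G') : edge_op (val f') = Te f'.
Proof. by rewrite /edge_op valK. Qed.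

Lemma edge_op_adj_val (f' : gE G') : edge_op_adj (val f') = Tes f'.
Proof. by rewrite /edge_op_adj valK. Qed.

Lemma edge_op_e : edge_op e = Tu.
Proof. by rewrite /edge_op insubF ?eqxx. Qed.

Lemma edge_op_adj_e : edge_op_adj e = Tu.
Proof. by rewrite /edge_op_adj insubF ?eqxx. Qed.

Lemma edge_op_proj_inj f h :
  edge_op f (proj_at (gs f) (inj_at (gs f) h)) = edge_op f h.
Proof.
rewrite proj_inj_at; case: eqP => [sf_w|//].
by rewrite -Tv_gr_e -sf_w edge_op_source.
Qed.

Lemma edge_op_adj_proj_inj f h :
  edge_op_adj f (proj_at (gr f) (inj_at (gr f) h)) = edge_op_adj f h.
Proof.
rewrite proj_inj_at; case: eqP => [/(indeg1_edge_unique indeg1) ->|//].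
by rewrite edge_op_adj_e Tv_idem.
Qed.

Lemma Tv_proj_inj v h : Tv (cv v) (proj_at v (inj_at v h)) = Tv (cv v) h.
Proof. by rewrite proj_inj_at; case: eqP => [->|//]; rewrite Tv_gr_e Tv_idem. Qed.

Lemma inj_at_linear v : linear (inj_at v).
Proof.
by rewrite /inj_at; case: ifP => _; [exact: dsum_in2_linear | exact: dsum_in1_linear].
Qed.

Lemma bounded_inj_at v : bounded_map (inj_at v).
Proof.
by rewrite /inj_at; case: ifP => _; [exact: bounded_dsum_in2 | exact: bounded_dsum_in1].
Qed.

Lemma bounded_proj_at v : bounded_map (proj_at v).
Proof.
by rewrite /proj_at; case: ifP => _; [exact: bounded_dsum_pr2 | exact: bounded_dsum_pr1].
Qed.

Lemma bounded_edge_op f : bounded_map (edge_op f).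
Proof. by apply/bounded_opP; rewrite /edge_op; case: insub. Qed.

Lemma bounded_Tes (f' : gE G') : bounded_map (Tes f').
Proof.
split; first exact: adjoint_linear (Tes_adj f').
exists 1 => // y; rewrite mul1r.
apply: (adjoint_contraction (Tv_linear _) (Tv_selfadj _) (Tv_idem _) (Tes_adj f')) => z.
by have := Te_CK (F := [set f']) (v := gr f') _ z; rewrite big_set1; apply=> ? /set1P ->.
Qed.

Lemma bounded_edge_op_adj f : bounded_map (edge_op_adj f).
Proof.
by rewrite /edge_op_adj; case: insub => [f'|]; [exact: bounded_Tes | exact/bounded_opP].
Qed.

Lemma Sv_bounded v : bounded_op (Sv v).
Proof.
apply/bounded_opP; apply: bounded_map_comp (bounded_inj_at v).
exact: bounded_map_comp (bounded_proj_at v) (proj1 (bounded_opP _) (Tv_bounded _)).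
Qed.

Lemma Se_bounded f : bounded_op (Se f).
Proof.
apply/bounded_opP; apply: bounded_map_comp (bounded_inj_at _).
exact: bounded_map_comp (bounded_proj_at _) (bounded_edge_op f).
Qed.

Lemma Se_adjoint f : is_adjoint (Se f) (Ses f).
Proof. by move=> x y; rewrite /Se /Ses inj_at_adj edge_op_adjoint proj_at_adj. Qed.

Lemma Sv_selfadj v : is_adjoint (Sv v) (Sv v).
Proof. by move=> x y; rewrite /Sv inj_at_adj Tv_selfadj proj_at_adj. Qed.

Lemma Sv_idem v x : Sv v (Sv v x) = Sv v x.
Proof. by rewrite /Sv Tv_proj_inj Tv_idem. Qed.

Lemma Sv_orth v w : v != w -> forall x, Sv v (Sv w x) = 0.
Proof.
move=> vw x; rewrite /Sv.
have [same|other] := boolP ((v == gr e) == (w == gr e)); last first.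
  by rewrite proj_inj_at_other // (lin0 (Tv_linear _)) (lin0 (inj_at_linear _)).
have vnw : v != gr e.
  by apply: contra vw => /eqP ve; move: same; rewrite ve eqxx => /eqP/esym/eqP ->.
have wnw : w != gr e by rewrite -(eqP same).
rewrite /inj_at /proj_at (negbTE vnw) (negbTE wnw) /= dsum_pr1_in1 Tv_orth ?linear0 //.
by apply: contra vw => /eqP/(congr1 val); rewrite !val_contract_vertex // => ->.
Qed.

Lemma Ses_Se f x : Ses f (Se f x) = Sv (gs f) x.
Proof. by rewrite /Ses /Se edge_op_adj_proj_inj edge_op_adj_edge_op. Qed.

Lemma Se_Ses f x :
  Se f (Ses f x) = inj_at (gr f) (edge_op f (edge_op_adj f (proj_at (gr f) x))).
Proof. by rewrite /Se /Ses edge_op_proj_inj. Qed.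

Lemma Sv_val (v' : gV G') x : Sv (val v') x = corner (Tv v') x.
Proof.
have v'_ne : val v' != gr e by rewrite -cV_predE //; case: v'.
by rewrite /Sv /inj_at /proj_at (negbTE v'_ne) contract_vertex_val.
Qed.

Lemma Se_CK (v : gV G) (F : {set gE G}) : (forall f, f \in F -> gr f = v) ->
  forall x, 0 <= inner (Sv v x - \sum_(f in F) Se f (Ses f x)) x.
Proof.
move=> F_v x; case: (eqVneq v (gr e)) => [ve|vnw].
  have : F \subset [set e].
    apply/subsetP => f /F_v fv; rewrite inE.
    by apply/eqP/(indeg1_edge_unique indeg1); rewrite fv.
  rewrite subset1 => /orP [/eqP ->|/eqP ->].
    rewrite big_set1 Se_Ses /Sv ve edge_op_e edge_op_adj_e Tv_gr_e !Tv_idem.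
    by rewrite subrr inner0l.
  by rewrite big_set0 subr0 (proj_inner_ge0 (Sv_selfadj v) (Sv_idem v)).
have eF : e \notin F by apply: contra vnw => /F_v <-.
rewrite (sum_contract_edges _ eF).
under eq_bigr => f' f'F do rewrite Se_Ses (F_v _ f'F) edge_op_val edge_op_adj_val.
rewrite -(lin_sum (inj_at_linear v)) /Sv -(linB (inj_at_linear v)) inj_at_adj.
have := Te_CK (v := cv v) (F := [set f' | val f' \in F]) _ (proj_at v x).
rewrite (eq_bigl (fun f' => val f' \in F)) => [|f']; last by rewrite inE.
by apply=> f'; rewrite inE => /F_v /= ->.
Qed.

Lemma Sv_sum x : \sum_(v : gV G) Sv v x = x.
Proof.
rewrite (bigD1 (gr e)) //= sum_contract_vertices //.
under eq_bigr => v' _ do rewrite Sv_val.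
rewrite /corner -linear_sum /= Tv_sum /Sv /inj_at /proj_at eqxx /= Tv_gr_e.
by rewrite dsum_in2_P addrC -dsum_decomp.
Qed.

Lemma Se_e x : Se e x = in2 (Tu (pr1 x)).
Proof.
by rewrite /Se /inj_at /proj_at eqxx eq_sym (negbTE e_not_loop) edge_op_e.
Qed.

Lemma Se_val (f' : gE G') x : gs (val f') != gr e -> Se (val f') x = corner (Te f') x.
Proof.
move=> sf_nw; have rf_nw := gr_neq_e (valP f').
by rewrite /Se /inj_at /proj_at (negbTE sf_nw) (negbTE rf_nw) edge_op_val.
Qed.

Lemma Se_val_Se_e (f' : gE G') x :
  gs (val f') = gr e -> Se (val f') (Se e x) = corner (Te f') x.
Proof.
move=> sf_w; have rf_nw := gr_neq_e (valP f').
rewrite Se_e /Se /inj_at /proj_at sf_w eqxx (negbTE rf_nw) /= dsum_pr2_in2 Tv_idem.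
have -> : Tu (pr1 x) = Tv (cv (gs (val f'))) (pr1 x) by rewrite sf_w Tv_gr_e.
by rewrite edge_op_source edge_op_val.
Qed.

Section Generation.
Variable g : gE G.
Hypothesis gs_g : gs g = gr e.

Lemma Se_g x : Se g x = in1 (edge_op g (pr2 x)).
Proof.
have g_ne : g != e by apply/eqP => ge; move: e_not_loop; rewrite -{1}gs_g ge eqxx.
by rewrite /Se /inj_at /proj_at gs_g eqxx (negbTE (gr_neq_e g_ne)).
Qed.

(* The four terms are the block entries of [T]: [Se e] maps the first summand
   onto the second, and [Se g] maps the second isometrically into the first. *)
Lemma block_decomposition (T : op K) : linear T -> forall x,
  T x = corner (fun h => pr1 (T (in1 h))) x
      + Se e (corner (fun h => pr2 (T (in1 h))) x)
      + corner (fun h => pr1 (T (in2 (edge_op_adj g h)))) (Se g x)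
      + Se e (corner (fun h => pr2 (T (in2 (edge_op_adj g h)))) (Se g x)).
Proof.
move=> T_linear x.
rewrite !Se_e Se_g /corner !dsum_pr1_in1 edge_op_adj_edge_op gs_g Tv_gr_e.
by rewrite !dsum_in2_P -addrA -!dsum_decomp -(linD T_linear) -dsum_decomp.
Qed.

Lemma generates_BH_lift : generates_BH Tv Te -> generates_BH Sv Se.
Proof.
move=> T_gen A A_sub A_closed ASv ASe.
have A_corner X : bounded_op X -> A (corner X).
  apply: T_gen (corner_subalgebra A_sub) (corner_wot_closed A_closed) _ _ X => [v'|f'].
    have := ASv (val v'); congr A.
    by apply: functional_extensionality => x; rewrite Sv_val.
  have [_ [_ [_ A_comp]]] := A_sub.
  case: (eqVneq (gs (val f')) (gr e)) => [sf_w|sf_nw].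
    have := A_comp _ _ (ASe (val f')) (ASe e); congr A.
    by apply: functional_extensionality => x; rewrite Se_val_Se_e.
  have := ASe (val f'); congr A.
  by apply: functional_extensionality => x; rewrite Se_val.
move=> T /bounded_opP T_bounded; have [_ [A_add [_ A_comp]]] := A_sub.
have bounded_block (S : hV H -> hV K) (p : hV K -> hV H) :
    bounded_map S -> bounded_map p -> A (corner (fun h => p (T (S h)))).
  move=> S_bounded p_bounded; apply/A_corner/bounded_opP.
  exact: bounded_map_comp (bounded_map_comp S_bounded T_bounded) p_bounded.
have in1_b := bounded_dsum_in1 Tu_linear (Tv_selfadj _) (Tv_idem _).
have pr1_b := bounded_dsum_pr1 Tu_linear (Tv_selfadj _) (Tv_idem _).
have pr2_b := bounded_dsum_pr2 Tu_linear (Tv_selfadj _) (Tv_idem _).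
have in2_adj_b := bounded_map_comp (bounded_edge_op_adj g)
  (bounded_dsum_in2 Tu_linear (Tv_selfadj _) (Tv_idem _)).
have := A_add _ _ (A_add _ _ (A_add _ _
  (bounded_block _ _ in1_b pr1_b)
  (A_comp _ _ (ASe e) (bounded_block _ _ in1_b pr2_b)))
  (A_comp _ _ (bounded_block _ _ in2_adj_b pr1_b) (ASe g)))
  (A_comp _ _ (ASe e) (A_comp _ _ (bounded_block _ _ in2_adj_b pr2_b) (ASe g))).
congr A; apply: functional_extensionality => x.
by rewrite [RHS](block_decomposition T_bounded.1).
Qed.

Lemma has_BH_fsa_lift : generates_BH Tv Te -> (exists h : hV H, h != 0) ->
  has_BH_fsa G K.
Proof.
move=> T_gen [h h_neq0]; split.
  by exists (in1 h); apply: contra h_neq0 => /eqP/(congr1 pr1) h0; apply/eqP.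
exists Sv, Se; split; last exact: generates_BH_lift.
split; first exact: Sv_bounded.
split; first exact: Se_bounded.
exists Ses; do ![split | exact: Se_adjoint | exact: Sv_selfadj | exact: Sv_idem
  | exact: Sv_orth | exact: Ses_Se | exact: Se_CK | exact: Sv_sum].
Qed.

End Generation.
End LiftAlongContraction.

Lemma has_BH_fsa_contract (G : graph) (e : gE G) :
  transitive_graph G -> has_branch_vertex G -> indeg (gr e) = 1%N ->
  (exists H : hilbert, has_BH_fsa (contract e) H) ->
  exists K : hilbert, has_BH_fsa G K.
Proof.
move=> trG brG indeg1 [H [H_nz [Tv [Te [[Tv_b [Te_b [Tes T_tck]]] T_gen]]]]].
have [Tes_adj [Tv_sa [Tv_id [Tv_orth [Tes_Te [Te_CK Tv_sum]]]]]] := T_tck.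
have e_not_loop := indeg1_range_not_loop trG brG indeg1.
have [p /path_from_to_ends [[g gs_g] _]] := trG (gr e) (gr e).
eexists; exact: (has_BH_fsa_lift Tv_b Te_b Tes_adj Tv_sa Tv_id Tv_orth Tes_Te Te_CK
  Tv_sum e_not_loop indeg1 gs_g T_gen H_nz).
Qed.

Lemma contracts_to_lift (G Gt : graph) :
  contracts_to G Gt -> transitive_graph G -> has_branch_vertex G ->
  transitive_graph Gt /\
  ((exists H : hilbert, has_BH_fsa Gt H) -> exists K : hilbert, has_BH_fsa G K).
Proof.
elim=> {G Gt} [G|G G1 Gt [e [indeg1 ->]] _ IH] trG brG; first by split.
have e_not_loop := indeg1_range_not_loop trG brG indeg1.
have [trGt lift] := IH (transitive_contract e_not_loop trG)
  (has_branch_vertex_contract brG indeg1).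
by split=> // /lift; exact: has_BH_fsa_contract.
Qed.

Theorem corollary3p5 (G Gt : graph) :
  transitive_graph G -> ~ is_cycle G ->
  contracts_to G Gt -> fully_contracted Gt ->
  (forall v : gV Gt, (2 <= indeg v)%N) /\
  ((exists H : hilbert, has_BH_fsa Gt H) -> exists K : hilbert, has_BH_fsa G K).
Proof.
move=> trG ncG GGt fcGt.
have [trGt lift] := contracts_to_lift GGt trG (noncycle_has_branch_vertex trG ncG).
by split=> // v; exact: fully_contracted_indeg_ge2.
Qed.
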